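(* Let $\ell\ge2$, $r_0,\dots,r_\ell\ge1$ integers, $d_0,\dots,d_\ell$ integers with $d_V=\sum_kd_k=0$, and $\mathbf{g}\ge1$ an integer. For every real $c>\max_k\mu_k$ there is a real number $\Phi(c)>0$ with $\mathring{\mathfrak{F}}(c)=(\mu_0-\mu_1)\Phi(c)$, where $\mathring{\mathfrak{F}}(c)$ is defined in the context. In particular, if $\mathring{\mathfrak{F}}(c)>0$ then $\mu_0>\mu_1$.
   Context: $\mu_k=d_k/r_k$, $r_V=\sum_kr_k$, $\pi_R=\prod_k(r_k-1)!$. For $1\le j\ne k\le\ell$: $\alpha_0=\frac{\pi_R}{r_V!}(cr_V-d_V)$, $\alpha_j=\frac{\pi_R}{(r_V+1)!}r_j(c(r_V+1)-d_V-\mu_j)$, $\alpha_{jk}=\frac{\pi_R}{(r_V+2)!}r_jr_k(c(r_V+2)-d_V-\mu_j-\mu_k)$, $\alpha_{jj}=\frac{\pi_R}{(r_V+2)!}r_j(r_j+1)(c(r_V+2)-d_V-2\mu_j)$, $\beta_0=\frac{\pi_R}{(r_V-1)!}((r_V-1)r_Vc+2(1-\mathbf{g})-(r_V-1)d_V)$, $\beta_j=\frac{\pi_Rr_j}{r_V!}(r_V(r_V-1)c+2(1-\mathbf{g})-d_V(r_V-2)-r_V\mu_j)$. $A_{ij}=\alpha_{ij}-\alpha_i\alpha_j/\alpha_0$ for $2\le i,j\le\ell$ (invertible for $c>\max\mu_k$), and $\mathring{\mathfrak{F}}(c)=(\alpha_0\beta_1-\alpha_1\beta_0)-\sum_{j,r=2}^\ell(A^{-1})_{rj}(\alpha_0\beta_r-\alpha_r\beta_0)\big(\alpha_{j1}-\frac{\alpha_1\alpha_j}{\alpha_0}\big)$.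 (When $V_0=U_0/L$, $V_1=L$ arise from the test configuration of a subbundle $L$ of an indecomposable summand $U_0$ of $E$ over a curve of genus $\ge1$, normalized so that $\deg E=0$, $\mathring{\mathfrak{F}}(c)$ at $c=m$ is a positive multiple of the relative Donaldson–Futaki invariant for the polarization $\mathcal{O}(1)_{\mathbb{P}(E)}\otimes\mathcal{O}(m)_C$.) *)

From HB Require Import structures.
From mathcomp Require Import all_boot all_order all_algebra.
From mathcomp Require Import reals.
Set Implicit Arguments. Unset Strict Implicit. Unset Printing Implicit Defensive.
Import Order.TTheory GRing.Theory Num.Theory.
Local Open Scope ring_scope.

Section Ffrak.
Variables (R : realType) (l : nat) (r : nat -> nat) (d : nat -> int)
          (g : nat) (c : R).

Definition mu (k : nat) : R := (d k)%:~R / (r k)%:R.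
Definition rV : nat := (\sum_(k < l.+1) r k)%N.
Definition dV : R := (\sum_(k < l.+1) d k)%:~R.
Definition piR : R := (\prod_(k < l.+1) ((r k).-1)`!)%N%:R.

Definition alpha0 : R := piR / (rV`!)%:R * (c * rV%:R - dV).
Definition alpha1 (j : nat) : R :=
  piR / (rV.+1`!)%:R * (r j)%:R * (c * (rV.+1)%:R - dV - mu j).
Definition alpha2 (j k : nat) : R :=
  if j == k then
    piR / (rV.+2`!)%:R * (r j)%:R * ((r j)%:R + 1)
      * (c * (rV.+2)%:R - dV - 2 * mu j)
  else
    piR / (rV.+2`!)%:R * (r j)%:R * (r k)%:R
      * (c * (rV.+2)%:R - dV - mu j - mu k).
Definition beta0 : R :=
  piR / ((rV.-1)`!)%:R
    * ((rV%:R - 1) * rV%:R * c + 2 * (1 - g%:R) - (rV%:R - 1) * dV).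
Definition beta1 (j : nat) : R :=
  piR * (r j)%:R / (rV`!)%:R
    * (rV%:R * (rV%:R - 1) * c + 2 * (1 - g%:R) - dV * (rV%:R - 2)
       - rV%:R * mu j).

(* A_{ij}, 2 <= i,j <= l; the index i : 'I_(l-1) stands for i+2 *)
Definition Amx : 'M[R]_(l.-1) :=
  \matrix_(i < l.-1, j < l.-1)
    (alpha2 i.+2 j.+2 - alpha1 i.+2 * alpha1 j.+2 / alpha0).

Definition Ffrak : R :=
  (alpha0 * beta1 1 - alpha1 1 * beta0)
  - \sum_(j < l.-1) \sum_(s < l.-1)
      invmx Amx s j * (alpha0 * beta1 s.+2 - alpha1 s.+2 * beta0)
        * (alpha2 j.+2 1 - alpha1 1 * alpha1 j.+2 / alpha0).

End Ffrak.

Arguments mu {R} r d k.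
Arguments Ffrak {R} l r d g c.

From HB Require Import structures.
From mathcomp Require Import all_boot all_order all_algebra.
From mathcomp Require Import reals.
From mathcomp Require Import ring lra.
Import Order.TTheory GRing.Theory Num.Theory.
Set Implicit Arguments. Unset Strict Implicit. Unset Printing Implicit Defensive.
Local Open Scope ring_scope.

(* Write n = r_V and C = c (n + 2).  Since d_V = 0, the coefficients factor as
   alpha2 i k = K r_i (r_k (C - mu_i - mu_k) + [i = k] (C - 2 mu_i)), the rows of
   alpha2 sum to alpha1, alpha1 sums to alpha0 and beta1 sums to beta0.  Thanks to these
   row sums, Ffrak(c) = alpha0 <beta1, e> / (e_1 - e_0) for every e annihilated by the
   row alpha1 and the rows alpha2 i, i >= 2, as long as e_1 <> e_0; and A is invertible
   as soon as every such e with e_0 = e_1 vanishes.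
   Such an e is described by its defect
     G(e)_k = (C - mu_k) E - F + (C - 2 mu_k) e_k,   E = sum r e,  F = sum r mu e,
   which must be supported on {0, 1} with zero r-weighted sum.  The map G is injective:
   the moments (E, F) of a vector with given defect solve a 2x2 linear system whose
   determinant is positive precisely because mu_k < c.  So these e form a line, spanned
   by an explicit vector with e_1 > e_0 whose moments are proportional to mu_1 - mu_0;
   evaluating <beta1, e> on it gives Ffrak(c) = (mu_0 - mu_1) Phi with Phi > 0, the sign
   of the constant term coming from g >= 1. *)

Definition dot (R : pzSemiRingType) (l : nat) (v e : nat -> R) : R :=
  \sum_(k < l.+1) v k * e k.

Lemma dot_shift (R : comPzRingType) l (v e : nat -> R) x :
  dot l v (fun k => e k - x) = dot l v e - (\sum_(k < l.+1) v k) * x.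
Proof. by rewrite /dot mulr_suml -sumrB; apply: eq_bigr => k _; rewrite mulrBr. Qed.

Lemma dot_subr_scale (R : comPzRingType) l (v e f : nat -> R) s :
  dot l v (fun k => f k - s * e k) = dot l v f - s * dot l v e.
Proof. by rewrite /dot mulr_sumr -sumrB; apply: eq_bigr => k _; ring. Qed.

Lemma eq_dot (R : pzSemiRingType) l (v e f : nat -> R) :
  (forall k, (k <= l)%N -> e k = f k) -> dot l v e = dot l v f.
Proof. by move=> ef; apply: eq_bigr => k _; rewrite (ef _ (ltn_ord k)). Qed.

Lemma dotr0 (R : pzSemiRingType) l (v : nat -> R) : dot l v (fun _ => 0) = 0.
Proof. by rewrite /dot big1 // => k _; rewrite mulr0. Qed.

Lemma dot_delta (R : pzSemiRingType) l i (e : nat -> R) : (i <= l)%N ->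
  dot l (fun k => (i == k)%:R) e = e i.
Proof.
move=> lei; rewrite /dot; under eq_bigr do rewrite mulr_natl mulrb eq_sym.
by rewrite -big_mkcond big_ord1_eq ltnS lei.
Qed.

Lemma sum_ord_gt0 (R : numDomainType) l (f : nat -> R) :
  (forall k, (k <= l)%N -> 0 < f k) -> 0 < \sum_(k < l.+1) f k.
Proof.
move=> f_gt0; rewrite big_ord_recl ltr_pwDl ?f_gt0 //.
by apply: sumr_ge0 => k _; apply/ltW/f_gt0; exact: (ltn_ord (lift ord0 k)).
Qed.

Lemma dot_supp01 (R : pzSemiRingType) l (v e : nat -> R) : (0 < l)%N ->
  (forall k, (1 < k)%N -> (k <= l)%N -> e k = 0) ->
  dot l v e = v 0%N * e 0%N + v 1%N * e 1%N.
Proof.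
case: l => // l _ e0; rewrite /dot 2!big_ord_recl big1 ?addr0 //= => k _.
by rewrite e0 ?mulr0 // /bump !leq0n // !add1n ltnS ltn_ord.
Qed.

Lemma dotr1 (R : pzSemiRingType) l (v : nat -> R) :
  dot l v (fun _ => 1) = \sum_(k < l.+1) v k.
Proof. by apply: eq_bigr => k _; rewrite mulr1. Qed.

Lemma big_ord_recl2 (V : nmodType) m (h : nat -> V) :
  \sum_(k < m.+3) h k = h 0%N + h 1%N + \sum_(j < m.+1) h j.+2.
Proof. by rewrite 2!big_ord_recl addrA. Qed.

Section SchurComplement.
Variables (F : fieldType) (m : nat) (a2 : nat -> nat -> F) (a1 b1 : nat -> F)
  (a0 b0 : F).
Local Notation l := m.+2.

Definition schur_entry (i k : nat) : F := a2 i k - a1 i * a1 k / a0.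

Definition schur_mx : 'M[F]_m.+1 := \matrix_(i, j) schur_entry i.+2 j.+2.

(* [Ffrak l r d g c] unfolds to this form for the paper's coefficients, with l = m + 2. *)
Definition schur_form : F :=
  (a0 * b1 1%N - a1 1%N * b0)
  - \sum_(j < m.+1) \sum_(s < m.+1)
      invmx schur_mx s j * (a0 * b1 s.+2 - a1 s.+2 * b0)
        * (a2 j.+2 1%N - a1 1%N * a1 j.+2 / a0).

Definition bordered_kernel (e : nat -> F) : Prop :=
  (forall i : 'I_m.+1, dot l (a2 i.+2) e = 0) /\ dot l a1 e = 0.

Hypotheses (a0_neq0 : a0 != 0)
  (sum_a2 : forall i : 'I_m.+1, \sum_(k < l.+1) a2 i.+2 k = a1 i.+2)
  (sum_a1 : \sum_(k < l.+1) a1 k = a0)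
  (sum_b1 : \sum_(k < l.+1) b1 k = b0).

Lemma dot_schur_entry (i : 'I_m.+1) (e : nat -> F) :
  dot l (schur_entry i.+2) e = dot l (a2 i.+2) e - a1 i.+2 / a0 * dot l a1 e.
Proof.
by rewrite /dot mulr_sumr -sumrB; apply: eq_bigr => k _; rewrite /schur_entry; ring.
Qed.

Lemma sum_schur_entry (i : 'I_m.+1) : \sum_(k < l.+1) schur_entry i.+2 k = 0.
Proof. by rewrite -dotr1 dot_schur_entry !dotr1 sum_a2 sum_a1 mulfVK // subrr. Qed.

Lemma schur_row_tail (i : 'I_m.+1) (h : nat -> F) :
  \sum_(j < m.+1) schur_entry i.+2 j.+2 * h j.+2
  = dot l (schur_entry i.+2) h
    - schur_entry i.+2 0%N * h 0%N - schur_entry i.+2 1%N * h 1%N.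
Proof.
by rewrite /dot (big_ord_recl2 _ (fun k => schur_entry i.+2 k * h k)); ring.
Qed.

Lemma schur_mx_bordered_kernel (e : nat -> F) : bordered_kernel e ->
  schur_mx *m \col_j (e j.+2 - e 0%N)
  = - (e 1%N - e 0%N) *: \col_j (a2 j.+2 1%N - a1 1%N * a1 j.+2 / a0).
Proof.
move=> [ea2 ea1]; apply/matrixP => i k; rewrite ord1 !mxE.
under eq_bigr => j _ do rewrite !mxE.
have /= -> := schur_row_tail i (fun k => e k - e 0%N).
by rewrite dot_shift sum_schur_entry dot_schur_entry ea2 ea1 /schur_entry; ring.
Qed.

Lemma schur_mx_unit :
  (forall f, bordered_kernel f -> f 0%N = f 1%N -> forall k, (k <= l)%N -> f k = 0) ->
  schur_mx \in unitmx.
Proof.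
move=> bordered_kernel0; rewrite unitmxE unitfE -det_tr.
apply/negP => /det0P [v /negP v_neq0 v_ker]; apply: v_neq0.
pose g k : F := if k is j.+2 then v 0 (inord j) else 0.
have g_tail (j : 'I_m.+1) : g j.+2 = v 0 j by rewrite /g inord_val.
pose tau := dot l a1 g / a0.
have f_bal : bordered_kernel (fun k => g k - tau).
  split=> [i|]; rewrite dot_shift; last by rewrite sum_a1 /tau mulrC divfK ?subrr.
  rewrite sum_a2 /tau mulrA mulrAC -dot_schur_entry.
  have := schur_row_tail i g; rewrite [g 0%N]/= [g 1%N]/= !mulr0 !subr0 => <-.
  have := congr1 (fun M : 'rV_m.+1 => M 0 i) v_ker; rewrite !mxE => vA.
  by rewrite -[RHS]vA; apply: eq_bigr => j _; rewrite !mxE mulrC g_tail.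
have f0 := bordered_kernel0 _ f_bal erefl.
have tau0 : tau = 0.
  by have := f0 0%N isT; rewrite sub0r => /eqP; rewrite oppr_eq0 => /eqP.
apply/eqP/rowP => j; rewrite !mxE -g_tail.
by have := f0 j.+2 (ltn_ord j); rewrite tau0 subr0.
Qed.

Lemma schur_formE (e : nat -> F) :
  bordered_kernel e -> e 1%N != e 0%N -> schur_mx \in unitmx ->
  schur_form = a0 * dot l b1 e / (e 1%N - e 0%N).
Proof.
move=> e_bal e10 A_unit; set t := e 1%N - e 0%N.
have t_neq0 : t != 0 by rewrite subr_eq0.
have inv_col : invmx schur_mx *m \col_j (a2 j.+2 1%N - a1 1%N * a1 j.+2 / a0)
    = - t^-1 *: \col_j (e j.+2 - e 0%N).
  rewrite -[X in invmx _ *m X]scale1r -[1](mulVf t_neq0) -mulrNN -scalerA.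
  by rewrite -schur_mx_bordered_kernel // -scalemxAr mulKmx.
pose beta k := a0 * b1 k - a1 k * b0.
have dot_beta : dot l beta (fun k => e k - e 0%N) = a0 * dot l b1 e.
  have -> : dot l beta (fun k => e k - e 0%N) =
      a0 * dot l b1 (fun k => e k - e 0%N) - b0 * dot l a1 (fun k => e k - e 0%N).
    by rewrite /dot !mulr_sumr -sumrB; apply: eq_bigr => k _; rewrite /beta; ring.
  by rewrite !dot_shift sum_b1 sum_a1 e_bal.2; ring.
have row_s (s : 'I_m.+1) :
    \sum_(j < m.+1) invmx schur_mx s j * beta s.+2 * (a2 j.+2 1%N - a1 1%N * a1 j.+2 / a0)
    = beta s.+2 * (- t^-1 * (e s.+2 - e 0%N)).
  have := congr1 (fun M : 'cV_m.+1 => M s 0) inv_col; rewrite !mxE => <-.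
  by rewrite mulr_sumr; apply: eq_bigr => j _; rewrite !mxE; ring.
rewrite /schur_form exchange_big /=; under eq_bigr => s _ do rewrite row_s.
under eq_bigr do rewrite mulrCA; rewrite -mulr_sumr.
move: dot_beta; rewrite /dot (big_ord_recl2 _ (fun k => beta k * (e k - e 0%N))).
rewrite subrr mulr0 add0r -/t => /(canRL (addKr _)) ->.
by rewrite /beta; field.
Qed.

End SchurComplement.

Section Defect.
Variables (R : realFieldType) (l : nat) (w mu : nat -> R) (c : R).
Hypotheses (l_gt0 : (0 < l)%N) (w_gt0 : forall k, (k <= l)%N -> 0 < w k)
  (dot_w_mu : dot l w mu = 0) (mu_lt_c : forall k, (k <= l)%N -> mu k < c).

Definition mass : R := \sum_(k < l.+1) w k.

Let C := c * (mass + 2).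
Let a k := C - 2 * mu k.
Let wmu k := w k * mu k.
Let wa k := w k / a k.
Let wmua k := w k * mu k / a k.
Let S0 := \sum_(k < l.+1) wa k.
Let S1 := \sum_(k < l.+1) wmua k.
(* Twice the determinant of the linear system satisfied by the moments of a profile
   (dot_w_profile, dot_wmu_profile). *)
Let D := (1 + mass) * 2 - mass * S1.

(* For the paper's coefficients, [dot l (alpha2 i) e = K * w i * defect e i] (dot_alpha2). *)
Definition defect (e : nat -> R) k : R :=
  (C - mu k) * dot l w e - dot l wmu e + a k * e k.

(* Solves [defect e k = g k] for [e k], given the moments [E] and [F] of [e]. *)
Definition profile (E F : R) (g : nat -> R) k : R := (F - (C - mu k) * E + g k) / a k.

Lemma mass_gt0 : 0 < mass.
Proof. exact: sum_ord_gt0 w_gt0. Qed.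

Lemma c_gt0 : 0 < c.
Proof.
have : 0 < \sum_(k < l.+1) w k * (c - mu k).
  apply: (@sum_ord_gt0 _ _ (fun k => w k * (c - mu k))) => k lek.
  by rewrite mulr_gt0 ?w_gt0 ?subr_gt0 ?mu_lt_c.
under eq_bigr do rewrite mulrBr; rewrite sumrB -mulr_suml.
by rewrite -/(dot l w mu) dot_w_mu subr0 pmulr_rgt0 // mass_gt0.
Qed.

Lemma a_gt0 k : (k <= l)%N -> 0 < a k.
Proof.
move=> lek; have := mu_lt_c lek; have := mulr_gt0 c_gt0 mass_gt0.
rewrite /a /C; lra.
Qed.

Lemma a_neq0 k : (k <= l)%N -> a k != 0.
Proof. by move=> lek; rewrite gt_eqF ?a_gt0. Qed.

Lemma C_S0 : C * S0 = mass + 2 * S1.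
Proof.
rewrite /mass /S0 /S1 mulr_sumr mulr_sumr -big_split /=.
apply: eq_bigr => k _; have := a_neq0 (ltn_ord k).
by rewrite /wa /wmua /a => ak_neq0; field.
Qed.

Lemma C_gt0 : 0 < C.
Proof. by rewrite /C mulr_gt0 ?c_gt0 // addr_gt0 ?mass_gt0. Qed.

Lemma C_neq0 : C != 0.
Proof. by rewrite gt_eqF ?C_gt0. Qed.

Lemma S0E : S0 = (mass + 2 * S1) / C.
Proof. by rewrite -C_S0 mulrC mulKf ?C_neq0. Qed.

Lemma mass_S1_le : mass * S1 <= mass.
Proof.
rewrite /mass /S1 mulr_sumr; apply: ler_sum => k _.
have lek : (k <= l)%N := ltn_ord k.
rewrite -/mass (_ : _ * wmua k = w k * (mass * mu k / a k)); last by rewrite /wmua; ring.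
rewrite -[leRHS]mulr1 ler_pM2l ?w_gt0 // ler_pdivrMr ?a_gt0 // mul1r /a /C.
have := mu_lt_c lek; have := mass_gt0; nra.
Qed.

Lemma D_gt0 : 0 < D.
Proof. by have := mass_S1_le; have := mass_gt0; rewrite /D; lra. Qed.

Lemma D_neq0 : D != 0.
Proof. by rewrite gt_eqF ?D_gt0. Qed.

Lemma defect_profile e k : (k <= l)%N ->
  e k = profile (dot l w e) (dot l wmu e) (defect e) k.
Proof. by move=> lek; have := a_neq0 lek; rewrite /profile /defect => ak; field. Qed.

Lemma dot_w_profile E F g :
  dot l w (profile E F g) = F * S0 - E * (mass + S1) + dot l wa g.
Proof.
transitivity (\sum_(k < l.+1)
    (F * wa k - E / 2 * w k - E / 2 * (C * wa k) + wa k * g k)).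
  apply: eq_bigr => k _; have := a_neq0 (ltn_ord k).
  by rewrite /profile /wa /a => ak; field.
rewrite !big_split /= !sumrN -!mulr_sumr -/S0 -/mass -/(dot l wa g).
by rewrite C_S0; field.
Qed.

Lemma dot_wmu_profile E F g :
  dot l wmu (profile E F g) = F * S1 - E * C * S1 / 2 + dot l wmua g.
Proof.
transitivity (\sum_(k < l.+1)
    (F * wmua k - E / 2 * wmu k - E / 2 * (C * wmua k) + wmua k * g k)).
  apply: eq_bigr => k _; have := a_neq0 (ltn_ord k).
  by rewrite /profile /wmu /wmua /a => ak; field.
rewrite !big_split /= !sumrN -!mulr_sumr -/S1 -/(dot l w mu) -/(dot l wmua g).
by rewrite dot_w_mu; field.
Qed.

Lemma defect_inj h :
  (forall k, (k <= l)%N -> defect h k = 0) -> forall k, (k <= l)%N -> h k = 0.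
Proof.
move=> h0; set E := dot l w h; set F := dot l wmu h.
have h_prof k : (k <= l)%N -> h k = profile E F (fun _ => 0) k.
  by move=> lek; rewrite {1}defect_profile // /profile h0.
have eqE := dot_w_profile E F (fun _ => 0).
have eqF := dot_wmu_profile E F (fun _ => 0).
rewrite -!(eq_dot _ h_prof) !dotr0 !addr0 -/E -/F in eqE eqF.
have DE : D * E = 0.
  have -> : D * E = 2 * (1 - S1) * (E - (F * S0 - E * (mass + S1)))
                    + 2 * S0 * (F - (F * S1 - E * C * S1 / 2))
                    - E * S1 * (C * S0 - mass - 2 * S1) by rewrite /D; field.
  by rewrite -eqE -eqF C_S0; ring.
have DF : D * F = 0.
  have -> : D * F = 2 * (1 + mass + S1) * (F - (F * S1 - E * C * S1 / 2))
                    - C * S1 * (E - (F * S0 - E * (mass + S1)))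
                    - F * S1 * (C * S0 - mass - 2 * S1) by rewrite /D; field.
  by rewrite -eqE -eqF C_S0; ring.
move: DE DF => /eqP; rewrite mulf_eq0 (negPf D_neq0) => /eqP E0 /eqP.
rewrite mulf_eq0 (negPf D_neq0) => /eqP F0 k lek.
by rewrite h_prof // /profile E0 F0 mulr0 subrr addr0 mul0r.
Qed.

Lemma dot_w_defect e :
  dot l w (defect e) = (mass + 1) * C * dot l w e - (mass + 2) * dot l wmu e.
Proof.
transitivity (\sum_(k < l.+1)
    ((C * dot l w e - dot l wmu e) * w k - dot l w e * wmu k
     + C * (w k * e k) - 2 * (wmu k * e k))).
  by apply: eq_bigr => k _; rewrite /defect /wmu /a; ring.
rewrite !big_split /= !sumrN -!mulr_sumr -/mass -/(dot l w e) -/(dot l wmu e).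
by rewrite -/(dot l w mu) dot_w_mu; ring.
Qed.

Lemma defect_sub_scale f e s k :
  defect (fun j => f j - s * e j) k = defect f k - s * defect e k.
Proof. by rewrite /defect !dot_subr_scale; ring. Qed.

Lemma defect_eq_scale f e s :
  (forall k, (k <= l)%N -> defect f k = s * defect e k) ->
  forall k, (k <= l)%N -> f k = s * e k.
Proof.
move=> fe k lek; apply/eqP; rewrite -subr_eq0; apply/eqP.
apply: (defect_inj (h := fun j => f j - s * e j)) => // j lej.
by rewrite defect_sub_scale fe // subrr.
Qed.

Definition defect_balanced e : Prop :=
  (forall k, (1 < k)%N -> (k <= l)%N -> defect e k = 0) /\ dot l w (defect e) = 0.

Let g01 k := match k with 0 => - w 1%N | 1 => w 0%N | _ => 0 end.

Lemma dot_g01 v : dot l v g01 = v 1%N * w 0%N - v 0%N * w 1%N.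
Proof. by rewrite (dot_supp01 _ l_gt0) => [|[|[|k]]] //=; ring. Qed.

Definition kernel_gain : R := w 0%N * w 1%N / (a 0%N * a 1%N * D).

(* The profile with defect [g01]: its moments solve the system above with the
   right-hand side given by dot_g01. *)
Definition kernel_vec : nat -> R :=
  profile (2 * (mass + 2) * kernel_gain * (mu 1%N - mu 0%N))
          (2 * C * (mass + 1) * kernel_gain * (mu 1%N - mu 0%N)) g01.

Lemma kernel_gain_gt0 : 0 < kernel_gain.
Proof.
by rewrite /kernel_gain divr_gt0 ?mulr_gt0 ?w_gt0 ?a_gt0 ?D_gt0.
Qed.

Lemma dot_w_kernel_vec :
  dot l w kernel_vec = 2 * (mass + 2) * kernel_gain * (mu 1%N - mu 0%N).
Proof.
rewrite dot_w_profile dot_g01 /wa S0E /kernel_gain /D /a.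
by field; rewrite -/D -/(a 0%N) -/(a 1%N) D_neq0 C_neq0 !a_neq0.
Qed.

Lemma dot_wmu_kernel_vec :
  dot l wmu kernel_vec = 2 * C * (mass + 1) * kernel_gain * (mu 1%N - mu 0%N).
Proof.
rewrite dot_wmu_profile dot_g01 /wmua /kernel_gain /D /a.
by field; rewrite -/D -/(a 0%N) -/(a 1%N) D_neq0 !a_neq0.
Qed.

Lemma defect_kernel_vec k : (k <= l)%N -> defect kernel_vec k = g01 k.
Proof.
move=> lek; rewrite /defect dot_w_kernel_vec dot_wmu_kernel_vec /kernel_vec /profile.
by field; rewrite a_neq0.
Qed.

Lemma kernel_vec_defect_balanced : defect_balanced kernel_vec.
Proof.
split=> [[|[|k]] // _ lek|]; first by rewrite defect_kernel_vec.
by rewrite (eq_dot _ defect_kernel_vec) dot_g01 mulrC subrr.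
Qed.

Lemma kernel_vec_spans f :
  defect_balanced f -> exists s, forall k, (k <= l)%N -> f k = s * kernel_vec k.
Proof.
move=> [f_tail f_mean]; exists (defect f 1%N / w 0%N).
apply: defect_eq_scale => k lek; rewrite defect_kernel_vec //.
have w0_neq0 : w 0%N != 0 by rewrite gt_eqF ?w_gt0.
case: k lek => [|[|k]] lek /=; last by rewrite f_tail ?mulr0.
- move: f_mean; rewrite (dot_supp01 _ l_gt0 f_tail) => /(canRL (addrK _)).
  by rewrite sub0r => /(canRL (mulKf w0_neq0)) ->; field.
- by rewrite divfK.
Qed.

Lemma kernel_vec_gap_gt0 : 0 < kernel_vec 1%N - kernel_vec 0%N.
Proof.
have -> : kernel_vec 1%N - kernel_vec 0%N = w 0%N / a 1%N + w 1%N / a 0%N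
    + 2 * C * mass * kernel_gain * (mu 1%N - mu 0%N) ^+ 2 / (a 0%N * a 1%N).
  rewrite /kernel_vec /profile /g01 /kernel_gain /D /a /=.
  by field; rewrite -/D -/(a 0%N) -/(a 1%N) D_neq0 !a_neq0.
rewrite ltr_wpDr ?addr_gt0 ?divr_gt0 ?w_gt0 ?a_gt0 //.
apply: divr_ge0; last by rewrite ltW ?mulr_gt0 ?a_gt0.
rewrite mulr_ge0 ?sqr_ge0 // ltW // mulr_gt0 ?kernel_gain_gt0 //.
by rewrite mulr_gt0 ?mass_gt0 // mulr_gt0 ?C_gt0.
Qed.

End Defect.

Section Coefficients.
Variables (R : realType) (m : nat) (r : nat -> nat) (d : nat -> int) (g : nat) (c : R).
Local Notation l := m.+2.
Local Notation N := (rV l r).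
Hypotheses (r_ge1 : forall k, (k <= l)%N -> (1 <= r k)%N)
  (sum_d : \sum_(k < l.+1) d k = 0)
  (mu_lt_c : forall k, (k <= l)%N -> mu r d k < c).

Let w k : R := (r k)%:R.
Local Notation mu := (mu r d).
Local Notation n := (mass l w).
Let C := c * (n + 2).
Let K := piR R l r / (N.+2`!)%:R.
Let Q := piR R l r / (N`!)%:R.

Let l_gt0 : (0 < l)%N. Proof. by []. Qed.

Let w_gt0 k : (k <= l)%N -> 0 < w k.
Proof. by move=> /r_ge1; rewrite /w ltr0n. Qed.

Let w_mu k : (k <= l)%N -> w k * mu k = (d k)%:~R.
Proof. by move=> /w_gt0 wk; rewrite /mu /= -/(w k) mulrC divfK ?gt_eqF. Qed.

Let dot_w_mu : dot l w mu = 0.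
Proof.
rewrite /dot (eq_bigr (fun k : 'I_l.+1 => (d k)%:~R)) => [|k _].
  by rewrite -rmorph_sum /= sum_d.
exact: w_mu (ltn_ord k).
Qed.

Lemma dV_eq0 : dV R l d = 0.
Proof. by rewrite /dV sum_d. Qed.

Lemma rV_mass : N%:R = n :> R.
Proof. by rewrite /rV natr_sum. Qed.

Let n_gt0 : 0 < n. Proof. exact: mass_gt0 w_gt0. Qed.

Let fact_neq0 k : (k`!)%:R != 0 :> R.
Proof. by rewrite pnatr_eq0 -lt0n fact_gt0. Qed.

Let natrS1 : (N.+1)%:R = n + 1 :> R.
Proof. by rewrite -natr1 rV_mass. Qed.

Let natrS2 : (N.+2)%:R = n + 2 :> R.
Proof. by rewrite -addn2 natrD rV_mass. Qed.

Let n1_neq0 : n + 1 != 0. Proof. by rewrite gt_eqF // ltr_pwDl. Qed.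
Let n2_neq0 : n + 2 != 0. Proof. by rewrite gt_eqF // ltr_pwDl. Qed.

Let piR_factS : piR R l r / ((N.+1)`!)%:R = K * (n + 2).
Proof.
by rewrite /K [N.+2`!]factS natrM natrS2; field; rewrite fact_neq0 n2_neq0.
Qed.

Let Q_K : Q = K * (n + 1) * (n + 2).
Proof.
rewrite /Q /K !factS !natrM natrS2 natrS1.
by field; rewrite fact_neq0 n1_neq0 n2_neq0.
Qed.

Let piR_factB : piR R l r / ((N.-1)`!)%:R = Q * n.
Proof.
have N_gt0 : (0 < N)%N by rewrite -(ltr0n R) rV_mass.
rewrite /Q -[in N`!](prednK N_gt0) factS natrM prednK // rV_mass.
by field; rewrite fact_neq0 gt_eqF.
Qed.

Lemma alpha0E : alpha0 l r d c = K * n * (n + 1) * C.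
Proof. by rewrite /alpha0 dV_eq0 subr0 -/Q Q_K rV_mass /C; ring. Qed.

Lemma alpha1E j : alpha1 l r d c j = K * w j * ((n + 1) * C - (n + 2) * mu j).
Proof. by rewrite /alpha1 dV_eq0 subr0 piR_factS natrS1 -/(w j) /C; ring. Qed.

Lemma alpha2E i k : alpha2 l r d c i k =
  K * w i * (w k * (C - mu i - mu k) + (i == k)%:R * (C - 2 * mu i)).
Proof.
rewrite /alpha2 dV_eq0 subr0 -/K natrS2 -/(w i) -/(w k) /C.
by case: eqP => [->|_] /=; ring.
Qed.

Lemma beta0E : beta0 l r d g c = Q * n * ((n - 1) * n * c + 2 * (1 - g%:R)).
Proof. by rewrite /beta0 dV_eq0 piR_factB rV_mass; ring. Qed.

Lemma beta1E j : beta1 l r d g c j =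
  Q * w j * (n * (n - 1) * c + 2 * (1 - g%:R) - n * mu j).
Proof. by rewrite /beta1 dV_eq0 -/(w j) rV_mass /Q; ring. Qed.

Local Notation defect := (defect l w mu c).

Lemma dot_alpha2 i e : (i <= l)%N ->
  dot l (alpha2 l r d c i) e = K * w i * defect e i.
Proof.
move=> lei; rewrite /dot (eq_bigr (fun k : 'I_l.+1 =>
    K * w i * (C - mu i) * (w k * e k) - K * w i * (w k * mu k * e k)
    + K * w i * (C - 2 * mu i) * ((i == k)%:R * e k))) => [|k _]; last first.
  by rewrite alpha2E; ring.
rewrite !big_split /= sumrN -!mulr_sumr -/(dot l w e).
rewrite -/(dot l (fun k => w k * mu k) e) -/(dot l (fun k => (i == k)%:R) e).
by rewrite dot_delta // /defect /C; ring.
Qed.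

Lemma dot_alpha1 e : dot l (alpha1 l r d c) e = K * dot l w (defect e).
Proof.
rewrite (dot_w_defect c dot_w_mu) /dot (eq_bigr (fun k : 'I_l.+1 =>
    K * (n + 1) * C * (w k * e k) - K * (n + 2) * (w k * mu k * e k))) => [|k _].
  by rewrite sumrB -!mulr_sumr /C; ring.
by rewrite alpha1E; ring.
Qed.

Lemma dot_beta1 e : dot l (beta1 l r d g c) e =
  Q * ((n * (n - 1) * c + 2 * (1 - g%:R)) * dot l w e
       - n * dot l (fun k => w k * mu k) e).
Proof.
rewrite /dot (eq_bigr (fun k : 'I_l.+1 =>
    Q * (n * (n - 1) * c + 2 * (1 - g%:R)) * (w k * e k)
    - Q * n * (w k * mu k * e k))) => [|k _].
  by rewrite sumrB -!mulr_sumr; ring.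
by rewrite beta1E; ring.
Qed.

Lemma sum_alpha2 (i : 'I_m.+1) :
  \sum_(k < l.+1) alpha2 l r d c i.+2 k = alpha1 l r d c i.+2.
Proof.
rewrite -dotr1 (@dot_alpha2 i.+2 _ (ltn_ord i)) /defect !dotr1 -/(dot l w mu) dot_w_mu.
by rewrite alpha1E /C -/(mass l w); ring.
Qed.

Lemma sum_alpha1 : \sum_(k < l.+1) alpha1 l r d c k = alpha0 l r d c.
Proof.
rewrite -dotr1 dot_alpha1 (dot_w_defect c dot_w_mu) !dotr1 -/(dot l w mu) dot_w_mu.
by rewrite alpha0E /C -/(mass l w); ring.
Qed.

Lemma sum_beta1 : \sum_(k < l.+1) beta1 l r d g c k = beta0 l r d g c.
Proof.
rewrite -dotr1 dot_beta1 !dotr1 -/(dot l w mu) dot_w_mu.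
by rewrite beta0E -/(mass l w); ring.
Qed.

Let K_gt0 : 0 < K.
Proof. by rewrite divr_gt0 ?ltr0n ?fact_gt0 // prodn_gt0 // => k; rewrite fact_gt0. Qed.

Lemma bordered_kernel_defect e :
  bordered_kernel m (alpha2 l r d c) (alpha1 l r d c) e <-> defect_balanced l w mu c e.
Proof.
have Kw_neq0 k : (k <= l)%N -> K * w k != 0.
  by move=> /w_gt0 wk; rewrite mulf_neq0 ?gt_eqF.
rewrite /bordered_kernel /defect_balanced; split=> [[e_a2 e_a1]|[e_tail e_mean]]; split.
- move=> [|[|k]] // _ lek; move: (e_a2 (Ordinal (lek : (k < m.+1)%N))) => /eqP.
  by rewrite dot_alpha2 // mulf_eq0 (negPf (Kw_neq0 _ lek)) => /eqP.
- by move: e_a1 => /eqP; rewrite dot_alpha1 mulf_eq0 gt_eqF // => /eqP.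
- move=> i; rewrite (@dot_alpha2 i.+2 _ (ltn_ord i)) e_tail ?mulr0 //.
  exact: ltn_ord i.
- by rewrite dot_alpha1 e_mean mulr0.
Qed.

Let c_gt0 : 0 < c. Proof. exact: c_gt0 w_gt0 dot_w_mu mu_lt_c. Qed.

Let alpha0_gt0 : 0 < alpha0 l r d c.
Proof.
by rewrite alpha0E /C mulr_gt0 ?(mulr_gt0 (mulr_gt0 K_gt0 n_gt0)) ?mulr_gt0 ?addr_gt0.
Qed.

Local Notation kernel_vec := (kernel_vec l w mu c).

Let gap_gt0 : 0 < kernel_vec 1%N - kernel_vec 0%N.
Proof. exact: kernel_vec_gap_gt0 l_gt0 w_gt0 dot_w_mu mu_lt_c. Qed.

Lemma Ffrak_kernel_vec :
  Ffrak l r d g c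
  = alpha0 l r d c * dot l (beta1 l r d g c) kernel_vec / (kernel_vec 1%N - kernel_vec 0%N).
Proof.
have a0_neq0 : alpha0 l r d c != 0 by rewrite gt_eqF.
have gap_neq0 : kernel_vec 1%N != kernel_vec 0%N by rewrite -subr_eq0 gt_eqF.
have kv_bal : bordered_kernel m (alpha2 l r d c) (alpha1 l r d c) kernel_vec.
  exact/bordered_kernel_defect/(kernel_vec_defect_balanced l_gt0 w_gt0 dot_w_mu mu_lt_c).
apply: (schur_formE a0_neq0 sum_alpha2 sum_alpha1 sum_beta1 kv_bal gap_neq0).
apply: (schur_mx_unit a0_neq0 sum_alpha2 sum_alpha1).
move=> f /bordered_kernel_defect f_bal f01 k lek.
have [s f_s] := kernel_vec_spans l_gt0 w_gt0 dot_w_mu mu_lt_c f_bal.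
rewrite f_s //; suff -> : s = 0 by rewrite mul0r.
move: f01; rewrite !f_s // => /eqP; rewrite -subr_eq0 -mulrBr mulf_eq0 subr_eq0.
by rewrite [kernel_vec 0%N == _]eq_sym (negPf gap_neq0) orbF => /eqP.
Qed.

Definition Phi : R :=
  4 * alpha0 l r d c * Q * kernel_gain l w mu c * (n + 2) * (n * c + g%:R - 1)
  / (kernel_vec 1%N - kernel_vec 0%N).

Lemma Ffrak_factor : Ffrak l r d g c = (mu 0%N - mu 1%N) * Phi.
Proof.
rewrite Ffrak_kernel_vec dot_beta1 (dot_w_kernel_vec l_gt0 w_gt0 dot_w_mu mu_lt_c).
rewrite (dot_wmu_kernel_vec l_gt0 w_gt0 dot_w_mu mu_lt_c) /Phi.
by field; rewrite gt_eqF.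
Qed.

Lemma Phi_gt0 : (1 <= g)%N -> 0 < Phi.
Proof.
move=> g_ge1; have ng_gt0 : 0 < n * c + g%:R - 1.
  have : 1 <= g%:R :> R by rewrite ler1n.
  by have := mulr_gt0 n_gt0 c_gt0; lra.
have Q_gt0 : 0 < Q by rewrite Q_K mulr_gt0 ?(mulr_gt0 K_gt0) ?addr_gt0.
apply: divr_gt0 => //; rewrite mulr_gt0 // mulr_gt0 ?addr_gt0 //.
rewrite mulr_gt0 ?(kernel_gain_gt0 l_gt0 w_gt0 dot_w_mu mu_lt_c) //.
by rewrite mulr_gt0 // mulr_gt0.
Qed.

End Coefficients.

Theorem proposition3p19 (R : realType) (l : nat) (r : nat -> nat)
    (d : nat -> int) (g : nat) :
  (2 <= l)%N ->
  (forall k, (k <= l)%N -> (1 <= r k)%N) ->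
  (\sum_(k < l.+1) d k = 0)%R ->
  (1 <= g)%N ->
  forall c : R, (forall k, (k <= l)%N -> mu r d k < c) ->
    (exists Phi : R, 0 < Phi /\
       Ffrak l r d g c = (mu r d 0 - mu r d 1) * Phi)
    /\ (0 < Ffrak l r d g c -> @mu R r d 1 < @mu R r d 0).
Proof.
case: l => [|[|m]] // _ r_ge1 sum_d g_ge1 c mu_lt_c.
have F_eq := Ffrak_factor g r_ge1 sum_d mu_lt_c.
have Phi_pos := Phi_gt0 r_ge1 sum_d mu_lt_c g_ge1.
split; first by exists (Phi m r d g c).
by rewrite F_eq pmulr_lgt0 // subr_gt0.
Qed.
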